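(* Let $\Omega$ be a set, and let $G\le\mathrm{Sym}(\Omega)$ be block-faithful and $k$-by-block-transitive on $\Omega$ relative to an equivalence relation $\sim$ that is nontrivial (some class has more than one element), for some $k\ge 2$. Let $N$ be a nontrivial normal subgroup of $G$. Then $G = N G(\omega)$ for every $\omega\in\Omega$. In particular, $N$ is not abelian.
   Context: Blocks are $\sim$-classes; $G(\omega)$ is the stabilizer of $\omega$. $\Omega^{[k]}$ is the set of $k$-tuples no two entries of which lie in the same block. $G$ is $k$-by-block-transitive if $\sim$ is $G$-invariant, there are at least $k$ blocks, and $G$ is transitive on $\Omega^{[k]}$; it is block-faithful if it acts faithfully on the set of blocks. *)

(* Permutation groups on an arbitrary (possibly infinite) set
   Omega, modelled as a type T; group elements are functions T -> T. *)
From Stdlib Require Import Arith.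

Definition comp {T : Type} (f g : T -> T) : T -> T := fun x => f (g x).

Definition inverse_of {T : Type} (g g' : T -> T) : Prop :=
  (forall x, g (g' x) = x) /\ (forall x, g' (g x) = x).

(* G is a subgroup of Sym(T): contains id, closed under composition and
   inverses (so every element is a bijection). *)
Definition perm_group {T : Type} (G : (T -> T) -> Prop) : Prop :=
  G (fun x => x) /\
  (forall f g, G f -> G g -> G (comp f g)) /\
  (forall f, G f -> exists f', G f' /\ inverse_of f f').

Definition subgroup {T : Type} (N G : (T -> T) -> Prop) : Prop :=
  perm_group N /\ (forall n, N n -> G n).

Definition normal_subgroup {T : Type} (N G : (T -> T) -> Prop) : Prop :=
  subgroup N G /\
  (forall g g' n, G g -> inverse_of g g' -> N n -> N (comp g (comp n g'))).

Definition equivalence {T : Type} (sim : T -> T -> Prop) : Prop :=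
  (forall x, sim x x) /\ (forall x y, sim x y -> sim y x) /\
  (forall x y z, sim x y -> sim y z -> sim x z).

Definition invariant {T : Type} (G : (T -> T) -> Prop) (sim : T -> T -> Prop) :=
  forall g, G g -> forall x y, sim x y <-> sim (g x) (g y).

(* Omega^[k]: k-tuples (indexed by 0..k-1) with no two entries in the same block *)
Definition in_Omega_k {T : Type} (sim : T -> T -> Prop) (k : nat) (t : nat -> T) :=
  forall i j, i < k -> j < k -> i <> j -> ~ sim (t i) (t j).

Definition at_least_k_blocks {T : Type} (sim : T -> T -> Prop) (k : nat) :=
  exists t, in_Omega_k sim k t.

Definition k_by_block_transitive {T : Type} (G : (T -> T) -> Prop)
  (sim : T -> T -> Prop) (k : nat) : Prop :=
  invariant G sim /\ at_least_k_blocks sim k /\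
  (forall t u, in_Omega_k sim k t -> in_Omega_k sim k u ->
     exists g, G g /\ forall i, i < k -> g (t i) = u i).

(* the action on the set of blocks is faithful: an element fixing every
   block is the identity *)
Definition block_faithful {T : Type} (G : (T -> T) -> Prop) (sim : T -> T -> Prop) :=
  forall g, G g -> (forall x, sim (g x) x) -> forall x, g x = x.

Definition nontrivial_equiv {T : Type} (sim : T -> T -> Prop) :=
  exists x y, x <> y /\ sim x y.

Definition nontrivial_group {T : Type} (N : (T -> T) -> Prop) :=
  exists n, N n /\ exists x, n x <> x.

Definition abelian_group {T : Type} (N : (T -> T) -> Prop) :=
  forall a b, N a -> N b -> forall x, a (b x) = b (a x).

(* A nontrivial normal subgroup N contains, by block-faithfulness, an element
   n moving some point y out of its block.  Since G is transitive on pairs of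
   points lying in distinct blocks, the conjugates of n map any point to any
   point of another block; going through a third block, N is transitive, and
   a transitive N gives G = N G(w) (Frattini argument).  If N were abelian,
   an element of N mapping x to another point of its block would commute with
   the transitive group N and hence fix every block, so it would be trivial by
   block-faithfulness. *)
From Stdlib Require Import Arith Lia Classical.

Definition transitive_group {T : Type} (H : (T -> T) -> Prop) : Prop :=
  forall a b : T, exists h, H h /\ h a = b.

Section Distinct_block_tuples.

Context {T : Type} {sim : T -> T -> Prop} {k : nat}.
Hypothesis Hsim : equivalence sim.

Lemma in_Omega_k_reindex (t : nat -> T) (s : nat -> nat) :
  (forall i, i < k -> s i < k) ->
  (forall i j, i < k -> j < k -> s i = s j -> i = j) ->
  in_Omega_k sim k t -> in_Omega_k sim k (fun i => t (s i)).
Proof.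
  intros Hs Hinj Ht i j Hi Hj Hij.
  apply Ht; auto.
Qed.

Lemma in_Omega_k_swap (t : nat -> T) (j m : nat) :
  j < k -> m < k -> in_Omega_k sim k t ->
  in_Omega_k sim k (fun i => t (if i =? j then m else if i =? m then j else i)).
Proof.
  intros Hj Hm.
  apply in_Omega_k_reindex.
  - intros i Hi; destruct (Nat.eqb_spec i j), (Nat.eqb_spec i m); lia.
  - intros i i' Hi Hi'.
    destruct (Nat.eqb_spec i j), (Nat.eqb_spec i m),
      (Nat.eqb_spec i' j), (Nat.eqb_spec i' m); lia.
Qed.

Lemma in_Omega_k_set (t : nat -> T) (j : nat) (a : T) :
  in_Omega_k sim k t -> (forall i, i < k -> i <> j -> ~ sim (t i) a) ->
  in_Omega_k sim k (fun i => if i =? j then a else t i).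
Proof.
  destruct Hsim as [_ [Hsym _]].
  intros Ht Ha i i' Hi Hi' Hii'.
  destruct (Nat.eqb_spec i j), (Nat.eqb_spec i' j); subst.
  - contradiction.
  - intro Hai'; apply (Ha i'); auto.
  - apply Ha; auto.
  - apply Ht; auto.
Qed.

(* If [a] shares a block with some [t m], the entry [t m] is first moved to
   position [j], where [a] then replaces it. *)
Lemma in_Omega_k_put (t : nat -> T) (j : nat) (a : T) :
  j < k -> in_Omega_k sim k t ->
  exists u, in_Omega_k sim k u /\ u j = a /\
    forall i, i < k -> i <> j -> ~ sim (t i) a -> u i = t i.
Proof.
  destruct Hsim as [_ [Hsym Htrans]].
  intros Hj Ht.
  destruct (classic (exists m, m < k /\ sim (t m) a)) as [[m [Hm Hma]] | Hfree].
  - exists (fun i => if i =? j then a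
                     else t (if i =? j then m else if i =? m then j else i)).
    split; [|split].
    + apply in_Omega_k_set; [apply in_Omega_k_swap; auto|].
      intros i Hi Hij Hia.
      destruct (Nat.eqb_spec i j); [contradiction|].
      destruct (Nat.eqb_spec i m).
      * apply (Ht j m); eauto; congruence.
      * apply (Ht i m); eauto.
    + now rewrite Nat.eqb_refl.
    + intros i Hi Hij Hia.
      destruct (Nat.eqb_spec i j); [contradiction|].
      destruct (Nat.eqb_spec i m); [subst; contradiction|reflexivity].
  - exists (fun i => if i =? j then a else t i).
    split; [|split].
    + apply in_Omega_k_set; auto.
      intros i Hi _ Hia; apply Hfree; eauto.
    + now rewrite Nat.eqb_refl.
    + intros i _ Hij _.
      destruct (Nat.eqb_spec i j); [contradiction|reflexivity].
Qed.

Lemma in_Omega_k_pair (t : nat -> T) (a b : T) :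
  2 <= k -> in_Omega_k sim k t -> ~ sim a b ->
  exists u, in_Omega_k sim k u /\ u 0 = a /\ u 1 = b.
Proof.
  intros Hk Ht Hab.
  destruct (in_Omega_k_put t 0 a ltac:(lia) Ht) as [u [Hu [Hu0 _]]].
  destruct (in_Omega_k_put u 1 b ltac:(lia) Hu) as [v [Hv [Hv1 Hvu]]].
  exists v; repeat split; auto.
  rewrite Hvu; [exact Hu0 | lia | lia | now rewrite Hu0].
Qed.

End Distinct_block_tuples.

Section Block_transitive_groups.

Context {T : Type} {G N : (T -> T) -> Prop} {sim : T -> T -> Prop}.
Hypothesis Hsim : equivalence sim.

Lemma k_by_block_transitive_pair {k : nat} :
  2 <= k -> k_by_block_transitive G sim k ->
  forall a b c d, ~ sim a b -> ~ sim c d ->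
  exists g, G g /\ g a = c /\ g b = d.
Proof.
  intros Hk [_ [[t Ht] Htr]] a b c d Hab Hcd.
  destruct (in_Omega_k_pair Hsim t a b Hk Ht Hab) as [u [Hu [Hu0 Hu1]]].
  destruct (in_Omega_k_pair Hsim t c d Hk Ht Hcd) as [v [Hv [Hv0 Hv1]]].
  destruct (Htr u v Hu Hv) as [g [Gg Hg]].
  exists g; split; [exact Gg|].
  rewrite <- Hu0, <- Hu1, <- Hv0, <- Hv1.
  split; apply Hg; lia.
Qed.

Lemma moves_block_of_block_faithful :
  (forall n, N n -> G n) -> block_faithful G sim -> nontrivial_group N ->
  exists n y, N n /\ ~ sim (n y) y.
Proof.
  intros HNG Hbf [n [Nn [x Hx]]].
  apply NNPP; intro Hnone.
  apply Hx, (Hbf n (HNG n Nn)).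
  intro y; apply NNPP; intro Hy.
  apply Hnone; eauto.
Qed.

Lemma normal_subgroup_moves_distinct_blocks (n : T -> T) (y : T) :
  perm_group G -> normal_subgroup N G ->
  (forall a b c d, ~ sim a b -> ~ sim c d -> exists g, G g /\ g a = c /\ g b = d) ->
  N n -> ~ sim (n y) y ->
  forall a b, ~ sim a b -> exists m, N m /\ m a = b.
Proof.
  destruct Hsim as [_ [Hsym _]].
  intros [_ [_ HGinv]] [_ Hnorm] Hpair Nn Hy a b Hab.
  assert (Hba : ~ sim b a) by auto.
  destruct (Hpair (n y) y b a Hy Hba) as [g [Gg [Hgb Hga]]].
  destruct (HGinv g Gg) as [g' [_ Hgg']].
  exists (comp g (comp n g')); split; [exact (Hnorm g g' n Gg Hgg' Nn)|].
  destruct Hgg' as [_ Hg'g].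
  unfold comp; rewrite <- Hga, Hg'g; exact Hgb.
Qed.

Lemma transitive_of_moves_distinct_blocks (c0 c1 : T) :
  (forall f g, N f -> N g -> N (comp f g)) ->
  (forall a b, ~ sim a b -> exists m, N m /\ m a = b) ->
  ~ sim c0 c1 -> transitive_group N.
Proof.
  destruct Hsim as [_ [Hsym Htrans]].
  intros HNc Hmove H01 a b.
  destruct (classic (sim a b)) as [Hab|Hab]; [|now apply Hmove].
  assert (Hc : exists c, ~ sim a c).
  { destruct (classic (sim a c0)); [exists c1|exists c0]; eauto. }
  destruct Hc as [c Hac].
  destruct (Hmove a c Hac) as [m1 [Nm1 Hm1]].
  destruct (Hmove c b) as [m2 [Nm2 Hm2]]; [eauto|].
  exists (comp m2 m1); split; [auto|].
  unfold comp; rewrite Hm1; exact Hm2.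
Qed.

Lemma transitive_subgroup_factorization :
  perm_group G -> subgroup N G -> transitive_group N ->
  forall w g, G g -> exists n h, N n /\ G h /\ h w = w /\ forall x, g x = n (h x).
Proof.
  intros [_ [HGc _]] [[_ [_ HNinv]] HNG] Htr w g Gg.
  destruct (Htr w (g w)) as [n [Nn Hn]].
  destruct (HNinv n Nn) as [n' [Nn' [Hnn' Hn'n]]].
  exists n, (comp n' g); repeat split; auto.
  - unfold comp; rewrite <- Hn; apply Hn'n.
  - intro x; unfold comp; rewrite Hnn'; reflexivity.
Qed.

(* An element [a] of an abelian transitive [N] commutes with elements mapping
   [x] anywhere, so it preserves every block as soon as it preserves [x]'s. *)
Lemma abelian_transitive_block_trivial :
  (forall n, N n -> G n) -> invariant G sim -> block_faithful G sim ->
  transitive_group N -> abelian_group N ->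
  forall x y, sim x y -> x = y.
Proof.
  destruct Hsim as [_ [Hsym _]].
  intros HNG Hinv Hbf Htr Hab x y Hxy.
  destruct (Htr x y) as [a [Na Hax]].
  rewrite <- Hax; symmetry.
  apply (Hbf a (HNG a Na)).
  intro z; destruct (Htr x z) as [c [Nc Hcx]]; subst z.
  rewrite (Hab a c Na Nc), Hax.
  apply (Hinv c (HNG c Nc) y x); auto.
Qed.

End Block_transitive_groups.

Theorem corollary2p4 (T : Type) (G N : (T -> T) -> Prop) (sim : T -> T -> Prop)
  (k : nat) :
  perm_group G -> equivalence sim -> nontrivial_equiv sim -> 2 <= k ->
  block_faithful G sim -> k_by_block_transitive G sim k ->
  normal_subgroup N G -> nontrivial_group N ->
  (forall w : T, forall g, G g ->
     exists n h, N n /\ G h /\ h w = w /\ forall x, g x = n (h x)) /\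
  ~ abelian_group N.
Proof.
  intros HG Hsim [x [x' [Hxx' Hsxx']]] Hk Hbf Hkbt HN HNnt.
  pose proof HN as [[[_ [HNc _]] HNG] _].
  pose proof (k_by_block_transitive_pair Hsim Hk Hkbt) as Hpair.
  destruct Hkbt as [Hinv [[t Ht] _]].
  destruct (moves_block_of_block_faithful HNG Hbf HNnt) as [n [y [Nn Hy]]].
  assert (Htr : transitive_group N).
  { apply (transitive_of_moves_distinct_blocks Hsim (t 0) (t 1) HNc).
    - exact (normal_subgroup_moves_distinct_blocks Hsim n y HG HN Hpair Nn Hy).
    - apply Ht; lia. }
  split.
  - exact (transitive_subgroup_factorization HG (proj1 HN) Htr).
  - intro Hab.
    exact (Hxx' (abelian_transitive_block_trivial Hsim HNG Hinv Hbf Htr Hab x x' Hsxx')).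
Qed.
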